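(* If $\ell$ is a bisector of a quadrilateral $Q$ in $K^2$, then there is a unique bisector $\ell'$ of $Q$ for which $\{\ell,\ell'\}$ is a $Q$-pair.
   Context: $K$ is a field of characteristic $\neq 2$. Every line $L$ in $K^2$ has an equation $tX-uY+v=0$ normalized so that $t=1$ if $u=0$ and $u=1$ if $u\neq 0$; coefficients denoted $t_L,u_L,v_L$. A quadrilateral $Q=ABA'B'$ consists of four distinct lines $A,B,A',B'$ (sides), not all through one point, with adjacent sides ($A,B$; $B,A'$; $A',B'$; $B',A$) not parallel; opposite sides may be parallel. Vertices: $A\cap B$, $B\cap A'$, $A'\cap B'$, $B'\cap A$ (two may coincide if three sides are concurrent). The centroid is the average of the four vertices. Let $\alpha=t_Au_Bu_{A'}u_{B'}-u_At_Bu_{A'}u_{B'}+u_Au_Bt_{A'}u_{B'}-u_Au_Bu_{A'}t_{B'}$, $\beta=t_Au_Bt_{A'}u_{B'}-u_At_Bu_{A'}t_{B'}$, $\gamma=t_At_Bt_{A'}u_{B'}-t_At_Bu_{A'}t_{B'}+t_Au_Bt_{A'}t_{B'}-u_At_Bt_{A'}t_{B'}$, and $\langle \mathbf v,\mathbf w\rangle_Q=\mathbf v^T\begin{pmatrix}\gamma&-\beta\\-\beta&\alpha\end{pmatrix}\mathbf w$. Lines $\ell_1,\ell_2$ are $Q$-orthogonal if $\langle (u_{\ell_1},t_{\ell_1}),(u_{\ell_2},t_{\ell_2})\rangle_Q=0$. A line $\ell$ crosses a pair $\{\ell_1,\ell_2\}$ if distinct from both and not parallel to both; $\mathrm{mid}_{\{\ell_1,\ell_2\}}(\ell)$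 is the midpoint of the points where $\ell$ meets $\ell_1,\ell_2$ (the point at infinity of $\ell$ if one is at infinity). $\ell$ bisects $Q$ (is a bisector) if $\mathrm{mid}_{\mathsf P}(\ell)$ is the same for all pairs $\mathsf P$ among $\{A,A'\},\{B,B'\}$ that $\ell$ crosses; this common point is the midpoint of the bisector. A pair $\{\ell_1,\ell_2\}$ of bisectors (possibly $\ell_1=\ell_2$) is a $Q$-pair if the midpoint of their midpoints is the centroid of $Q$ and $\ell_1,\ell_2$ are $Q$-orthogonal. *)

From HB Require Import structures.
From mathcomp Require Import all_boot all_algebra.
Set Implicit Arguments. Unset Strict Implicit. Unset Printing Implicit Defensive.
Import GRing.Theory.
Local Open Scope ring_scope.

Section QuadDefs.
Variable K : fieldType.

(* A line of K^2 with normalized equation  t X - u Y + v = 0 :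
   LVert v   : (t,u,v) = (1,0,v)   (the case u = 0, t = 1)
   LSlope t v: (t,u,v) = (t,1,v)   (the case u = 1)            *)
Inductive line := LVert (v : K) | LSlope (t v : K).

Definition tL (l : line) : K := match l with LVert _ => 1 | LSlope t _ => t end.
Definition uL (l : line) : K := match l with LVert _ => 0 | LSlope _ _ => 1 end.
Definition vL (l : line) : K := match l with LVert v => v | LSlope _ v => v end.

Definition point := (K * K)%type.

Definition on_line (l : line) (p : point) : Prop :=
  tL l * p.1 - uL l * p.2 + vL l = 0.

Definition parallel (l1 l2 : line) : bool := tL l1 * uL l2 == tL l2 * uL l1.

(* intersection point of two non-parallel lines (Cramer's rule) *)
Definition meet (l1 l2 : line) : point :=
  let d := uL l1 * tL l2 - tL l1 * uL l2 in
  ((vL l1 * uL l2 - uL l1 * vL l2) / d, (tL l2 * vL l1 - tL l1 * vL l2) / d).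

(* points of the projective closure: finite points and points at infinity,
   the latter given by a normalized direction (u,t) of a line *)
Inductive ppoint := PFin (p : point) | PInf (d : K * K).

Definition pt_inf (l : line) : ppoint := PInf (uL l, tL l).

Definition avg2 (p q : point) : point := ((p.1 + q.1) / 2, (p.2 + q.2) / 2).

Definition crosses (l l1 l2 : line) : Prop :=
  l <> l1 /\ l <> l2 /\ ~ (parallel l l1 /\ parallel l l2).

(* mid_{l1,l2}(l) (meaningful when l crosses {l1,l2}) *)
Definition mid (l1 l2 l : line) : ppoint :=
  if parallel l l1 || parallel l l2 then pt_inf l
  else PFin (avg2 (meet l l1) (meet l l2)).

Definition is_quad (A B A' B' : line) : Prop :=
  [/\ (A <> B /\ A <> A' /\ A <> B' /\ B <> A' /\ B <> B' /\ A' <> B'),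
      ~ (exists p, [/\ on_line A p, on_line B p, on_line A' p & on_line B' p]),
      ~~ parallel A B, ~~ parallel B A' & ~~ parallel A' B' /\ ~~ parallel B' A].

Definition centroid (A B A' B' : line) : point :=
  let p1 := meet A B in let p2 := meet B A' in
  let p3 := meet A' B' in let p4 := meet B' A in
  ((p1.1 + p2.1 + p3.1 + p4.1) / 4, (p1.2 + p2.2 + p3.2 + p4.2) / 4).

Definition bisector (A B A' B' l : line) : Prop :=
  crosses l A A' -> crosses l B B' -> mid A A' l = mid B B' l.

Definition bis_midpoint (A B A' B' l : line) (m : ppoint) : Prop :=
  [/\ crosses l A A' \/ crosses l B B',
      crosses l A A' -> mid A A' l = m
    & crosses l B B' -> mid B B' l = m].

Definition qalpha (A B A' B' : line) : K :=
  tL A * uL B * uL A' * uL B' - uL A * tL B * uL A' * uL B'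
  + uL A * uL B * tL A' * uL B' - uL A * uL B * uL A' * tL B'.
Definition qbeta (A B A' B' : line) : K :=
  tL A * uL B * tL A' * uL B' - uL A * tL B * uL A' * tL B'.
Definition qgamma (A B A' B' : line) : K :=
  tL A * tL B * tL A' * uL B' - tL A * tL B * uL A' * tL B'
  + tL A * uL B * tL A' * tL B' - uL A * tL B * tL A' * tL B'.

Definition qform (A B A' B' : line) (v w : K * K) : K :=
  let a := qalpha A B A' B' in let b := qbeta A B A' B' in
  let c := qgamma A B A' B' in
  v.1 * (c * w.1 - b * w.2) + v.2 * (- b * w.1 + a * w.2).

Definition q_orthogonal (A B A' B' l1 l2 : line) : Prop :=
  qform A B A' B' (uL l1, tL l1) (uL l2, tL l2) = 0.

(* {l1,l2} is a Q-pair: both bisectors, the midpoint of their midpoints is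
   the centroid (this forces both midpoints to be finite), Q-orthogonal *)
Definition Q_pair (A B A' B' l1 l2 : line) : Prop :=
  [/\ bisector A B A' B' l1, bisector A B A' B' l2,
      exists p1 p2 : point,
        [/\ bis_midpoint A B A' B' l1 (PFin p1),
            bis_midpoint A B A' B' l2 (PFin p2)
          & avg2 p1 p2 = centroid A B A' B']
    & q_orthogonal A B A' B' l1 l2].

End QuadDefs.

From HB Require Import structures.
From mathcomp Require Import all_boot all_algebra ring.

(* A line l with midpoint M is determined by its direction d and M, and being a
   bisector says that, along l, M is halfway between the meets with A and A',
   and with B and B': two equations bilinear in (d, M).  If M' is the reflection
   of M in the centroid, the corresponding equations for M' and any direction
   Q-orthogonal to d turn out to be fixed linear combinations of those for M
   and d.  As the Q-form is nondegenerate when adjacent sides are not parallel,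
   there is exactly one line through M' in such a direction, and it is a
   bisector; the midpoint of any partner of l is forced to be M'. *)

Set Implicit Arguments.
Unset Strict Implicit.
Unset Printing Implicit Defensive.
Import GRing.Theory.
Local Open Scope ring_scope.

Section Vectors.
Variable K : fieldType.
Implicit Types (b e r s w x y : K * K).

Definition dotv x y := x.1 * y.1 + x.2 * y.2.
Definition detv x y := x.1 * y.2 - x.2 * y.1.

Lemma pair_neq0P x : reflect (x.1 != 0 \/ x.2 != 0) (x != (0, 0)).
Proof. by case: x => x1 x2; rewrite xpair_eqE negb_and; apply: orP. Qed.

Lemma dotv_eq0_of_detv_eq0 e b w :
  b != (0, 0) -> detv e b = 0 -> dotv b w = 0 -> dotv e w = 0.
Proof.
move=> /pair_neq0P b_neq0 he hb.
have e1 : dotv e w * b.1 = 0.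
  by transitivity (dotv b w * e.1 - w.2 * detv e b); [rewrite /dotv /detv | rewrite he hb]; ring.
have e2 : dotv e w * b.2 = 0.
  by transitivity (dotv b w * e.2 + w.1 * detv e b); [rewrite /dotv /detv | rewrite he hb]; ring.
by case: b_neq0 => hnz; [move: e1 | move: e2] => /eqP; rewrite mulf_eq0 (negbTE hnz) orbF => /eqP.
Qed.

Lemma detv_eq0_of_dotv_eq0 b x y :
  b != (0, 0) -> dotv b x = 0 -> dotv b y = 0 -> detv x y = 0.
Proof.
move=> /pair_neq0P b_neq0 hx hy.
have e1 : detv x y * b.1 = 0.
  by transitivity (y.2 * dotv b x - x.2 * dotv b y); [rewrite /dotv /detv | rewrite hx hy]; ring.
have e2 : detv x y * b.2 = 0.
  by transitivity (x.1 * dotv b y - y.1 * dotv b x); [rewrite /dotv /detv | rewrite hx hy]; ring.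
by case: b_neq0 => hnz; [move: e1 | move: e2] => /eqP; rewrite mulf_eq0 (negbTE hnz) orbF => /eqP.
Qed.

Lemma eq0_of_dotv_eq0 r s x :
  detv r s != 0 -> dotv r x = 0 -> dotv s x = 0 -> x = (0, 0).
Proof.
move=> hdet h1 h2.
have e1 : detv r s * x.1 = 0.
  by transitivity (s.2 * dotv r x - r.2 * dotv s x); [rewrite /dotv /detv | rewrite h1 h2]; ring.
have e2 : detv r s * x.2 = 0.
  by transitivity (r.1 * dotv s x - s.1 * dotv r x); [rewrite /dotv /detv | rewrite h1 h2]; ring.
move/eqP: e1; rewrite mulf_eq0 (negbTE hdet) => /eqP x1.
move/eqP: e2; rewrite mulf_eq0 (negbTE hdet) => /eqP x2.
by rewrite [x]surjective_pairing x1 x2.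
Qed.

End Vectors.

Section Lines.
Variable K : fieldType.
Implicit Types (l X Y : line K) (p M : point K) (b : K * K).

Definition lval l p := tL l * p.1 - uL l * p.2 + vL l.

Definition dir l : K * K := (uL l, tL l).

Definition wedge X Y := tL X * uL Y - uL X * tL Y.

Lemma dir_neq0 l : dir l != (0, 0).
Proof. by case: l => *; rewrite xpair_eqE oner_eq0 ?andbF. Qed.

Lemma dir_inj X Y : dir X = dir Y -> vL X = vL Y -> X = Y.
Proof.
move=> /pair_equal_spec[eu et].
case: X Y eu et => [v|t v] [v'|t' v'] /= eu et ->; rewrite ?et //.
  by move/eqP: eu; rewrite eq_sym oner_eq0.
by move/eqP: eu; rewrite oner_eq0.
Qed.

Lemma wedge_eq0 X Y : (wedge X Y == 0) = parallel X Y.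
Proof. by rewrite /wedge /parallel subr_eq0 [uL X * _]mulrC. Qed.

Lemma parallelP X Y : reflect (dir X = dir Y) (parallel X Y).
Proof.
apply: (iffP idP) => [|[eu et]]; last by rewrite /parallel eu et mulrC.
case: X => [v|t v]; case: Y => [v'|t' v']; rewrite /parallel /dir /= ?(mulr0, mulr1).
- by [].
- by rewrite oner_eq0.
- by rewrite eq_sym oner_eq0.
- by move/eqP->.
Qed.

Lemma parallel_refl X : parallel X X.
Proof. exact/parallelP. Qed.

Lemma parallel_sym X Y : parallel X Y = parallel Y X.
Proof. by apply/parallelP/parallelP. Qed.

Lemma parallel_trans Y X l : parallel X Y -> parallel Y l -> parallel X l.
Proof. by move=> /parallelP eXY /parallelP eYl; apply/parallelP; rewrite eXY. Qed.

Lemma meet_den_neq0 X Y : ~~ parallel X Y -> uL X * tL Y - tL X * uL Y != 0.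
Proof. by rewrite -wedge_eq0 /wedge -oppr_eq0 opprB [tL X * _]mulrC [uL X * _]mulrC. Qed.

Lemma parallel_on_line_eq X Y p :
  parallel X Y -> on_line X p -> on_line Y p -> X = Y.
Proof.
move=> /parallelP eXY onX onY; apply: dir_inj => //.
case: eXY => eu et; apply: (addrI (tL X * p.1 - uL X * p.2)).
by rewrite onX eu et onY.
Qed.

Lemma exists_line_normal_through b M :
  exists l, dotv b (dir l) = 0 /\ on_line l M.
Proof.
rewrite /dotv /on_line /=; have [b2_eq0|b2_neq0] := eqVneq b.2 0.
  by exists (LVert (- M.1)); rewrite /= b2_eq0; split; ring.
by exists (LSlope (- b.1 / b.2) (M.2 + b.1 / b.2 * M.1)); split=> /=; [field | ring].
Qed.

Lemma line_normal_through_uniq b M l l' :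
  b != (0, 0) -> dotv b (dir l) = 0 -> on_line l M ->
  dotv b (dir l') = 0 -> on_line l' M -> l = l'.
Proof.
move=> b_neq0 bl onl bl' onl'; apply: parallel_on_line_eq onl onl'.
rewrite -wedge_eq0 -oppr_eq0; apply/eqP.
by rewrite -(detv_eq0_of_dotv_eq0 b_neq0 bl bl') /detv /wedge /=; ring.
Qed.

End Lines.

Section Midpoints.
Variable K : fieldType.
Hypothesis hK : (2 : K) != 0.
Implicit Types (l X : line K) (M : point K).

(* The points of l are M + s (dir l), where lval X takes the value
   lval X M + s (wedge X l); so for M on l this says that l meets X and X' at
   opposite parameters s, i.e. that M is the midpoint of the two meets. *)
Definition midvec X X' M : K * K :=
  (lval X M * tL X' + lval X' M * tL X, - (lval X M * uL X' + lval X' M * uL X)).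

Definition mid_cond X X' l M := dotv (midvec X X' M) (dir l) = 0.

Lemma mid_condE X X' l M :
  mid_cond X X' l M <-> lval X M * wedge X' l + lval X' M * wedge X l = 0.
Proof.
by rewrite /mid_cond (_ : dotv _ _ = lval X M * wedge X' l + lval X' M * wedge X l) //
  /dotv /wedge /=; ring.
Qed.

Lemma avg2_meet_mid_cond l X X' :
  ~~ parallel l X -> ~~ parallel l X' ->
  on_line l (avg2 (meet l X) (meet l X')) /\
  mid_cond X X' l (avg2 (meet l X) (meet l X')).
Proof.
move=> /meet_den_neq0 dX /meet_den_neq0 dX'.
rewrite mid_condE /on_line /avg2 /meet /lval /wedge /=.
by split; field; rewrite hK dX dX'.
Qed.

Lemma mid_cond_avg2_meet l X X' M :
  ~~ parallel l X -> ~~ parallel l X' -> on_line l M -> mid_cond X X' l M ->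
  M = avg2 (meet l X) (meet l X').
Proof.
move=> nX nX'; have [] := avg2_meet_mid_cond nX nX'.
move: (avg2 _ _) => P; rewrite !mid_condE => onP condP onM condM.
have wX : wedge X l != 0 by rewrite wedge_eq0 parallel_sym.
have wX' : wedge X' l != 0 by rewrite wedge_eq0 parallel_sym.
(* M - P lies on the direction of l and solves the linear part of mid_cond. *)
have /pair_equal_spec[e1 e2] : (M.1 - P.1, M.2 - P.2) = (0, 0).
  apply: (@eq0_of_dotv_eq0 _ (tL l, - uL l)
    (tL X * wedge X' l + tL X' * wedge X l, - (uL X * wedge X' l + uL X' * wedge X l))).
  - rewrite /detv /= (_ : _ - _ = 2 * wedge X l * wedge X' l); first by rewrite !mulf_neq0.
    by rewrite /wedge; ring.
  - by rewrite /dotv /=; transitivity (lval l M - lval l P);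
      [rewrite /lval; ring | rewrite /lval onM onP subrr].
  - by rewrite /dotv /=; transitivity (
      (lval X M * wedge X' l + lval X' M * wedge X l) -
      (lval X P * wedge X' l + lval X' P * wedge X l));
      [rewrite /lval; ring | rewrite condM condP subrr].
by rewrite [M]surjective_pairing [P]surjective_pairing; congr pair; apply/eqP;
  rewrite -subr_eq0; apply/eqP.
Qed.

Lemma mid_condC X X' l M : mid_cond X X' l M <-> mid_cond X' X l M.
Proof. by rewrite !mid_condE addrC. Qed.

Lemma wedge_parallel X l : parallel l X -> wedge X l = 0.
Proof. by rewrite parallel_sym -wedge_eq0 => /eqP. Qed.

Lemma crosses_of_nonparallel l X X' :
  ~~ parallel l X -> ~~ parallel l X' -> crosses l X X'.
Proof.
move=> nX nX'; split; [|split]; last by case=> pX; rewrite pX in nX.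
  by move=> eX; rewrite eX parallel_refl in nX.
by move=> eX'; rewrite eX' parallel_refl in nX'.
Qed.

Lemma mid_cond_of_not_crosses l X X' M :
  ~ crosses l X X' -> on_line l M -> mid_cond X X' l M.
Proof.
move=> nc onM; rewrite mid_condE; apply/eqP/negPn/negP => hne; apply: nc.
have lvalM : lval l M = 0 := onM; have wll := wedge_parallel (parallel_refl l).
split; [|split].
- by move=> eX; rewrite -eX lvalM wll mul0r mulr0 addr0 eqxx in hne.
- by move=> eX'; rewrite -eX' lvalM wll mul0r mulr0 add0r eqxx in hne.
- by case=> pX pX'; rewrite !wedge_parallel // !mulr0 addr0 eqxx in hne.
Qed.

Lemma mid_cond_parallel_eq l X X' M :
  parallel l X -> ~~ parallel l X' -> on_line l M -> mid_cond X X' l M -> l = X.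
Proof.
move=> pX nX' onM; rewrite mid_condE (wedge_parallel pX) mulr0 addr0 => /eqP.
rewrite mulf_eq0 wedge_eq0 parallel_sym (negbTE nX') orbF => /eqP onX.
exact: parallel_on_line_eq onM onX.
Qed.

Lemma mid_of_mid_cond l X X' M :
  on_line l M -> mid_cond X X' l M -> crosses l X X' -> mid X X' l = PFin M.
Proof.
move=> onM condM [neX [neX' npar]].
case pX: (parallel l X); case pX': (parallel l X').
- by case: npar.
- by case: neX; apply: mid_cond_parallel_eq condM; rewrite ?pX'.
- by case: neX'; apply: (@mid_cond_parallel_eq l X' X M); rewrite ?pX ?pX' //; apply/mid_condC.
- by rewrite /mid pX pX' -(mid_cond_avg2_meet _ _ onM condM) ?pX ?pX'.
Qed.

Lemma mid_cond_of_mid l X X' M :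
  mid X X' l = PFin M -> on_line l M /\ mid_cond X X' l M.
Proof. by rewrite /mid; case: ifPn => // /norP[nX nX'] [<-]; apply: avg2_meet_mid_cond. Qed.

End Midpoints.

Section Bisectors.
Variable K : fieldType.
Hypothesis hK : (2 : K) != 0.
Implicit Types (l : line K) (M p q : point K).

Definition pairs_nonparallel (X X' Y Y' : line K) :=
  [/\ ~~ parallel X Y, ~~ parallel X Y', ~~ parallel X' Y & ~~ parallel X' Y'].

Lemma pairs_nonparallel_sym X X' Y Y' :
  pairs_nonparallel X X' Y Y' -> pairs_nonparallel Y Y' X X'.
Proof. by case=> *; split; rewrite parallel_sym. Qed.

Lemma nonparallel_of_parallel X X' Y Y' l :
  pairs_nonparallel X X' Y Y' -> parallel l X || parallel l X' ->
  ~~ parallel l Y && ~~ parallel l Y'.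
Proof.
have npar Z W : ~~ parallel Z W -> parallel l Z -> ~~ parallel l W.
  move=> nZW pZ; apply: contra nZW; rewrite parallel_sym in pZ.
  exact: parallel_trans pZ.
by case=> ? ? ? ? /orP[] pl; rewrite !(npar _ _ _ pl).
Qed.

Lemma bisector_sym X Y X' Y' l : bisector X Y X' Y' l -> bisector Y X Y' X' l.
Proof. by move=> bis cY cX; rewrite bis. Qed.

Lemma bisector_mid_cond_of_parallel X Y X' Y' l :
  pairs_nonparallel X X' Y Y' -> parallel l X || parallel l X' ->
  bisector X Y X' Y' l ->
  exists M, [/\ on_line l M, mid_cond X X' l M & mid_cond Y Y' l M].
Proof.
move=> np pX bis; have /andP[nY nY'] := nonparallel_of_parallel np pX.
have [onM condY] := avg2_meet_mid_cond hK nY nY'.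
exists (avg2 (meet l Y) (meet l Y')); split=> //.
apply: mid_cond_of_not_crosses onM => cX.
by move: (bis cX (crosses_of_nonparallel nY nY')); rewrite /mid pX (negbTE nY) (negbTE nY').
Qed.

Lemma bisector_mid_cond X Y X' Y' l :
  pairs_nonparallel X X' Y Y' -> bisector X Y X' Y' l ->
  exists M, [/\ on_line l M, mid_cond X X' l M & mid_cond Y Y' l M].
Proof.
move=> np bis.
case pX: (parallel l X || parallel l X'); first exact: bisector_mid_cond_of_parallel.
case pY: (parallel l Y || parallel l Y').
  have np' := pairs_nonparallel_sym np.
  by have [M [? ? ?]] := bisector_mid_cond_of_parallel np' pY (bisector_sym bis); exists M.
move/negbT/norP: pX => [nX nX']; move/negbT/norP: pY => [nY nY'].
have midX : mid X X' l = PFin (avg2 (meet l X) (meet l X')).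
  by rewrite /mid (negbTE nX) (negbTE nX').
have [onM condX] := mid_cond_of_mid hK midX.
exists (avg2 (meet l X) (meet l X')); split=> //.
apply: (proj2 (mid_cond_of_mid hK _)).
by rewrite -(bis (crosses_of_nonparallel nX nX') (crosses_of_nonparallel nY nY')).
Qed.

Lemma mid_cond_bisector X Y X' Y' l M :
  pairs_nonparallel X X' Y Y' -> on_line l M -> mid_cond X X' l M -> mid_cond Y Y' l M ->
  bisector X Y X' Y' l /\ bis_midpoint X Y X' Y' l (PFin M).
Proof.
move=> np onM condX condY.
have midX := mid_of_mid_cond hK onM condX; have midY := mid_of_mid_cond hK onM condY.
split=> [cX cY|]; first by rewrite midX ?midY.
split=> //; case pX: (parallel l X || parallel l X').
  by have /andP[nY nY'] := nonparallel_of_parallel np pX; right; apply: crosses_of_nonparallel.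
by move/negbT/norP: pX => [nX nX']; left; apply: crosses_of_nonparallel.
Qed.

Lemma bis_midpoint_inj X Y X' Y' l p q :
  bis_midpoint X Y X' Y' l (PFin p) -> bis_midpoint X Y X' Y' l (PFin q) -> p = q.
Proof.
case=> -[c|c] hp hp' [_ hq hq'].
  by move: (hq c); rewrite (hp c) => -[].
by move: (hq' c); rewrite (hp' c) => -[].
Qed.

Lemma bis_midpoint_on_line X Y X' Y' l p :
  bis_midpoint X Y X' Y' l (PFin p) -> on_line l p.
Proof. by case=> -[c|c] hX hY; apply: (proj1 (mid_cond_of_mid hK _)); [exact: hX | exact: hY]. Qed.

End Bisectors.

Section QForm.
Variable K : fieldType.
Hypothesis hK : (2 : K) != 0.
Variables A B A' B' : line K.
Implicit Types (l : line K) (M p q : point K) (d : K * K).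

Definition qmap d : K * K :=
  (qgamma A B A' B' * d.1 - qbeta A B A' B' * d.2,
   - qbeta A B A' B' * d.1 + qalpha A B A' B' * d.2).

Lemma q_orthogonalE l l' :
  q_orthogonal A B A' B' l l' <-> dotv (qmap (dir l)) (dir l') = 0.
Proof.
rewrite /q_orthogonal (_ : qform _ _ _ _ _ _ = dotv (qmap (dir l)) (dir l')) //.
by rewrite /qform /dotv /qmap /=; ring.
Qed.

Lemma qform_det : qalpha A B A' B' * qgamma A B A' B' - qbeta A B A' B' ^+ 2 =
  - (wedge A B * wedge B A' * wedge A' B' * wedge B' A).
Proof. by rewrite /qalpha /qbeta /qgamma /wedge; ring. Qed.

Definition creflect M : point K :=
  (2 * (centroid A B A' B').1 - M.1, 2 * (centroid A B A' B').2 - M.2).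

Lemma avg2_eq_centroid p q :
  avg2 p q = centroid A B A' B' <-> q = creflect p.
Proof.
rewrite /avg2 /creflect; case: (centroid _ _ _ _) => c1 c2 /=.
split=> [[<- <-]|->] /=; last by congr pair; field.
by rewrite {1}[q]surjective_pairing; congr pair; field.
Qed.

Hypotheses (hAB : ~~ parallel A B) (hBA' : ~~ parallel B A')
  (hA'B' : ~~ parallel A' B') (hB'A : ~~ parallel B' A).

Lemma qmap_neq0 d : d != (0, 0) -> qmap d != (0, 0).
Proof.
move=> d_neq0; apply: contra d_neq0 => /eqP /pair_equal_spec[q1 q2]; apply/eqP.
apply: (@eq0_of_dotv_eq0 _ (qgamma A B A' B', - qbeta A B A' B')
  (- qbeta A B A' B', qalpha A B A' B')); rewrite /dotv /detv /= //; last by rewrite mulNr.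
rewrite (_ : _ - _ = qalpha A B A' B' * qgamma A B A' B' - qbeta A B A' B' ^+ 2).
  by rewrite qform_det oppr_eq0 !mulf_neq0 // wedge_eq0.
by ring.
Qed.

(* Both sides are bilinear in d and (M, 1); the coefficients, found by
   comparing those forms, depend only on the directions of the sides. *)
Lemma detv_midvec_creflect_AA' M d :
  2 * detv (midvec A A' (creflect M)) (qmap d) =
  (wedge A B * wedge A' B' - wedge A B' * wedge B A') * dotv (midvec A A' M) d
  + wedge A A' ^+ 2 * dotv (midvec B B' M) d.
Proof.
rewrite /detv /midvec /creflect /centroid /meet /lval /qmap /dotv /qalpha /qbeta /qgamma.
rewrite /wedge /=; have h4 : (4 : K) != 0 by rewrite (_ : 4 = 2 * 2) ?mulf_neq0 //; ring.
by field; rewrite h4 !meet_den_neq0.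
Qed.

Lemma detv_midvec_creflect_BB' M d :
  2 * detv (midvec B B' (creflect M)) (qmap d) =
  - (wedge B B' ^+ 2 * dotv (midvec A A' M) d
     + (wedge A B * wedge A' B' - wedge A B' * wedge B A') * dotv (midvec B B' M) d).
Proof.
rewrite /detv /midvec /creflect /centroid /meet /lval /qmap /dotv /qalpha /qbeta /qgamma.
rewrite /wedge /=; have h4 : (4 : K) != 0 by rewrite (_ : 4 = 2 * 2) ?mulf_neq0 //; ring.
by field; rewrite h4 !meet_den_neq0.
Qed.

Lemma mid_cond_creflect l M :
  mid_cond A A' l M -> mid_cond B B' l M ->
  detv (midvec A A' (creflect M)) (qmap (dir l)) = 0 /\
  detv (midvec B B' (creflect M)) (qmap (dir l)) = 0.
Proof.
rewrite /mid_cond => condA condB.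
have half_eq0 (x : K) : 2 * x = 0 -> x = 0 by move/eqP; rewrite mulf_eq0 (negbTE hK) => /eqP.
split; apply: half_eq0.
  by rewrite detv_midvec_creflect_AA' condA condB !mulr0 addr0.
by rewrite detv_midvec_creflect_BB' condA condB !mulr0 addr0 oppr0.
Qed.

End QForm.

Theorem corollary6p7 (K : fieldType) (hK : (2 : K) != 0)
  (A B A' B' l : line K) :
  is_quad A B A' B' -> bisector A B A' B' l ->
  exists! l' : line K, bisector A B A' B' l' /\ Q_pair A B A' B' l l'.
Proof.
case=> _ _ hAB hBA' [hA'B' hB'A] bis_l.
have np : pairs_nonparallel A A' B B' by split; rewrite // parallel_sym.
have [M [onM condA condB]] := bisector_mid_cond hK np bis_l.
have [_ midM] := mid_cond_bisector hK np onM condA condB.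
set M' := creflect A B A' B' M.
have q_neq0 := qmap_neq0 hAB hBA' hA'B' hB'A (dir_neq0 l).
have [detA detB] := mid_cond_creflect hK hAB hBA' hA'B' hB'A condA condB.
have [l' [ortho onM']] := exists_line_normal_through (qmap A B A' B' (dir l)) M'.
have [bis_l' midM'] := mid_cond_bisector hK np onM'
  (dotv_eq0_of_detv_eq0 q_neq0 detA ortho) (dotv_eq0_of_detv_eq0 q_neq0 detB ortho).
exists l'; split.
  split=> //; split=> //; last exact/q_orthogonalE.
  by exists M, M'; split=> //; apply/avg2_eq_centroid.
move=> l'' [_ [_ _ [p [p' [midp midp' avgpp']]] ortho'']].
rewrite (bis_midpoint_inj midp midM) in avgpp'.
move/(avg2_eq_centroid hK): avgpp' => ep'; rewrite ep' in midp'.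
apply: line_normal_through_uniq q_neq0 ortho onM' _ (bis_midpoint_on_line hK midp').
exact/q_orthogonalE.
Qed.
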